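(* Let $C:2^M\to\mathbb{R}_{\ge0}$ be a monotone normalized cost function and $P_C$ its potential function. If $C$ is XOS (in particular, if $C$ is submodular), then $P_C(\vec S)\ge C(\vec S)$ for every allocation $\vec S$. If $C$ is subadditive, then $P_C(\vec S)\ge \frac{C(\vec S)}{2}$ for every allocation $\vec S$.
   Context: Setting. $N=\{1,\dots,n\}$ is a set of players and $M_1,\dots,M_n$ are pairwise disjoint finite sets; $M=\bigcup_i M_i$. An allocation is a vector $\vec S=(S_1,\dots,S_n)$ with $S_i\subseteq M_i$; since the $M_i$ are disjoint, allocations are identified with subsets $\bigcup_i S_i$ of $M$, so a function on allocations is a set function on $2^M$. The potential function of a cost function $C$ is $P_C(\vec S)=\sum_{\emptyset\neq I\subseteq N}\frac{C(\bigcup_{i\in I}S_i)}{|I|\binom{n}{|I|}}$. A set function $f$ on $2^M$ is XOS if there are additive functions $a_1,\dots,a_t$ (i.e. $a_r(S)=\sum_{j\in S}a_r(\{j\})$) with $f(S)=\max_r a_r(S)$ for all $S$; subadditive if $f(S)+f(T)\ge f(S\cup T)$ for all $S,T$. *)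

From HB Require Import structures.
From mathcomp Require Import all_boot all_order all_algebra.
Set Implicit Arguments. Unset Strict Implicit. Unset Printing Implicit Defensive.
Import Order.TTheory GRing.Theory Num.Theory.
Local Open Scope ring_scope.

(* The ground set M is a finType; [owner : M -> 'I_n]
   assigns each item to its player, so M_i = [set j | owner j == i] are
   pairwise disjoint and cover M.  An allocation (S_1,...,S_n) with
   S_i \subseteq M_i is identified with the set S = \bigcup_i S_i. *)

Definition part (M : finType) (n : nat) (owner : M -> 'I_n)
  (S : {set M}) (i : 'I_n) : {set M} := S :&: [set j | owner j == i].

Definition potential (R : realFieldType) (M : finType) (n : nat)
  (owner : M -> 'I_n) (C : {set M} -> R) (S : {set M}) : R :=
  \sum_(I : {set 'I_n} | I != set0)
     C (\bigcup_(i in I) part owner S i) / (#|I| * 'C(n, #|I|))%:R.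

Definition monotone (R : realFieldType) (M : finType) (C : {set M} -> R) :=
  forall A B : {set M}, A \subset B -> C A <= C B.

Definition normalized (R : realFieldType) (M : finType) (C : {set M} -> R) :=
  C set0 = 0.

Definition nonneg (R : realFieldType) (M : finType) (C : {set M} -> R) :=
  forall A : {set M}, 0 <= C A.

(* XOS: f = max of finitely many (t >= 1) additive functions a_1..a_t,
   a_r(S) = sum_{j in S} a_r({j}). The max is unfolded. *)
Definition XOS (R : realFieldType) (M : finType) (C : {set M} -> R) :=
  exists (t : nat) (a : 'I_t.+1 -> M -> R),
    forall A : {set M},
      (forall r, \sum_(j in A) a r j <= C A) /\
      (exists r, \sum_(j in A) a r j = C A).

Definition subadditive (R : realFieldType) (M : finType) (C : {set M} -> R) :=
  forall A B : {set M}, C (A :|: B) <= C A + C B.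

From HB Require Import structures.
From mathcomp Require Import all_boot all_order all_algebra.
Import Order.TTheory GRing.Theory Num.Theory.
Set Implicit Arguments. Unset Strict Implicit. Unset Printing Implicit Defensive.
Local Open Scope ring_scope.

(* The weights 1/(|I| C(n,|I|)) of the coalitions containing a fixed player
   sum to 1, so the potential of an additive cost is the cost itself; since
   the potential is monotone in the cost, an XOS cost dominated by additive
   functions, one of them tight at S, has potential at least C(S).
   For a subadditive cost, lower the weights to 1/((n+1) C(n,|I|)), which
   sum to 1 over all coalitions and are invariant under complementation;
   pairing each coalition I with its complement and using
   C(S_I) + C(S_{~I}) >= C(S) gives 2 P_C(S) >= C(S). *)

Section CardinalitySums.

Variables (R : realFieldType) (T : finType).

Lemma sum_by_card (P : pred {set T}) (f : nat -> R) :
  \sum_(I : {set T} | P I) f #|I| =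
  \sum_(k < #|T|.+1) #|[set I | P I & #|I| == k]|%:R * f k.
Proof.
transitivity
  (\sum_(I | P I) \sum_(k < #|T|.+1) (if k == #|I| :> nat then f k else 0)).
  by apply: eq_bigr => I _; rewrite -big_mkcond big_ord1_eq ltnS max_card.
rewrite exchange_big; apply: eq_bigr => k _.
rewrite -big_mkcondr /= mulr_natl -sumr_const; apply: eq_big => // I.
by rewrite inE eq_sym.
Qed.

Lemma card_draws_with (i : T) (k : nat) :
  #|[set I : {set T} | (i \in I) & #|I| == k.+1]| = 'C(#|T|.-1, k).
Proof.
have cardT : #|T| = #|T|.-1.+1 by rewrite prednK //; apply/card_gt0P; exists i.
have without : #|[set I : {set T} | (i \notin I) & #|I| == k.+1]|
               = 'C(#|T|.-1, k.+1).
  rewrite -[#|T|.-1](cardsC1 i) -cards_draws; apply: eq_card => I.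
  by rewrite !inE subsetC sub1set inE.
have := cardsID [set I : {set T} | i \in I] [set I : {set T} | #|I| == k.+1].
rewrite card_draws cardT binS -without.
have -> : [set I : {set T} | #|I| == k.+1] :\: [set I : {set T} | i \in I] =
          [set I : {set T} | (i \notin I) & #|I| == k.+1].
  by apply/setP => I; rewrite !inE andbC.
move/eqP; rewrite [X in _ == X]addnC eqn_add2r => /eqP <-.
by apply: eq_card => I; rewrite !inE andbC.
Qed.

Lemma sum_coalition_weights (i : T) :
  \sum_(I : {set T} | i \in I) ((#|I| * 'C(#|T|, #|I|))%:R)^-1 = 1 :> R.
Proof.
have T_gt0 : (0 < #|T|)%N by apply/card_gt0P; exists i.
rewrite (sum_by_card _ (fun k => ((k * 'C(#|T|, k))%:R)^-1)).
rewrite big_ord_recl mul0n invr0 mulr0 add0r.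
under eq_bigr => k _.
  rewrite lift0 card_draws_with -mul_bin_diag.
  rewrite natrM invfM mulrCA mulfV ?mulr1; last first.
    by rewrite pnatr_eq0 -lt0n bin_gt0 -ltnS prednK.
  over.
by rewrite sumr_const card_ord -[_ *+ _]mulr_natl mulfV // pnatr_eq0 -lt0n.
Qed.

Lemma sum_uniform_coalition_weights :
  \sum_(I : {set T}) ((#|T|.+1 * 'C(#|T|, #|I|))%:R)^-1 = 1 :> R.
Proof.
rewrite (sum_by_card _ (fun k => ((#|T|.+1 * 'C(#|T|, k))%:R)^-1)).
under eq_bigr => k _.
  have -> : #|[set I : {set T} | predT I & #|I| == k]| = 'C(#|T|, k).
    by rewrite -card_draws; apply: eq_card => I; rewrite !inE.
  rewrite natrM invfM mulrCA mulfV ?mulr1; last first.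
    by rewrite pnatr_eq0 -lt0n bin_gt0 -ltnS.
  over.
by rewrite sumr_const card_ord -[_ *+ _]mulr_natl mulfV // pnatr_eq0.
Qed.

End CardinalitySums.

Section Potential.

Variables (R : realFieldType) (M : finType) (n : nat) (owner : M -> 'I_n).

Definition coalition (S : {set M}) (I : {set 'I_n}) : {set M} :=
  [set j in S | owner j \in I].

Lemma bigcup_part (S : {set M}) (I : {set 'I_n}) :
  \bigcup_(i in I) part owner S i = coalition S I.
Proof.
apply/setP => j; rewrite !inE; apply/bigcupP/andP.
  by case=> i iI; rewrite /part !inE => /andP[-> /eqP ->].
by case=> jS jI; exists (owner j) => //; rewrite /part !inE jS eqxx.
Qed.

Lemma coalition0 (S : {set M}) : coalition S set0 = set0.
Proof. by apply/setP => j; rewrite !inE andbF. Qed.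

Lemma coalitionUC (S : {set M}) (I : {set 'I_n}) :
  coalition S I :|: coalition S (~: I) = S.
Proof.
by apply/setP => j; rewrite !inE; case: (j \in S); case: (owner j \in I).
Qed.

(* The empty coalition drops out on its own: its weight is 0^-1 = 0. *)
Lemma potentialE (C : {set M} -> R) (S : {set M}) :
  potential owner C S =
  \sum_(I : {set 'I_n}) C (coalition S I) / (#|I| * 'C(n, #|I|))%:R.
Proof.
rewrite /potential big_mkcond; apply: eq_bigr => I _; rewrite bigcup_part.
by case: eqP => [->|_] //; rewrite cards0 mul0n invr0 mulr0.
Qed.

Lemma ler_potential (C C' : {set M} -> R) (S : {set M}) :
  (forall A, C A <= C' A) -> potential owner C S <= potential owner C' S.
Proof.
move=> leCC'; apply: ler_sum => I _.
by apply: ler_wpM2r; [rewrite invr_ge0 ler0n | exact: leCC'].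
Qed.

Lemma potential_additive (a : M -> R) (S : {set M}) :
  potential owner (fun A => \sum_(j in A) a j) S = \sum_(j in S) a j.
Proof.
rewrite potentialE.
transitivity (\sum_(I : {set 'I_n}) \sum_(j in S)
  (if owner j \in I then a j / (#|I| * 'C(n, #|I|))%:R else 0)).
  apply: eq_bigr => I _; rewrite mulr_suml big_mkcond [RHS]big_mkcond.
  by apply: eq_bigr => j _; rewrite inE; case: (j \in S); case: (owner j \in I).
rewrite exchange_big; apply: eq_bigr => j _; rewrite -big_mkcond -mulr_sumr.
have := @sum_coalition_weights R _ (owner j).
by rewrite card_ord => ->; rewrite mulr1.
Qed.

Lemma potential_ge_uniform (C : {set M} -> R) (S : {set M}) :
  normalized C -> nonneg C ->
  \sum_(I : {set 'I_n}) C (coalition S I) / (n.+1 * 'C(n, #|I|))%:R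
  <= potential owner C S.
Proof.
move=> C0 C_ge0; rewrite potentialE; apply: ler_sum => I _.
have [->|I_neq0] := eqVneq I set0; first by rewrite coalition0 C0 !mul0r.
have I_le_n : (#|I| <= n)%N by rewrite -[X in (_ <= X)%N]card_ord max_card.
apply: ler_wpM2l; first exact: C_ge0.
rewrite lef_pV2 ?posrE ?ltr0n ?muln_gt0 ?card_gt0 ?I_neq0 ?bin_gt0 //.
by rewrite ler_nat leq_mul2r ltnW ?orbT.
Qed.

Lemma potential_ge_half (C : {set M} -> R) (S : {set M}) :
  normalized C -> nonneg C -> subadditive C -> C S / 2 <= potential owner C S.
Proof.
move=> C0 C_ge0 C_sub.
pose u (I : {set 'I_n}) : R := ((n.+1 * 'C(n, #|I|))%:R)^-1.
have uC I : u (~: I) = u I.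
  rewrite /u [#|~: I|]cardsCs setCK card_ord bin_sub //.
  by rewrite -[X in (_ <= X)%N]card_ord max_card.
have sum_u : \sum_(I : {set 'I_n}) u I = 1.
  by have := @sum_uniform_coalition_weights R 'I_n; rewrite card_ord.
have cover : C S <= \sum_(I : {set 'I_n})
                      (C (coalition S I) + C (coalition S (~: I))) * u I.
  rewrite -[C S]mulr1 -sum_u mulr_sumr; apply: ler_sum => I _.
  apply: ler_wpM2r; first by rewrite invr_ge0 ler0n.
  by have := C_sub (coalition S I) (coalition S (~: I)); rewrite coalitionUC.
have pair_complements :
    \sum_(I : {set 'I_n}) (C (coalition S I) + C (coalition S (~: I))) * u I
    = (\sum_(I : {set 'I_n}) C (coalition S I) * u I) * 2.
  rewrite mulr_natr mulr2n [X in _ = _ + X](reindex_inj (@setC_inj _)) /=.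
  rewrite -big_split /=.
  by apply: eq_bigr => I _; rewrite uC mulrDl.
rewrite ler_pdivrMr ?ltr0n //; apply: (le_trans cover).
rewrite pair_complements; apply: ler_wpM2r; first exact: ler0n.
exact: potential_ge_uniform.
Qed.

End Potential.

Theorem proposition3p3 (R : realFieldType) (M : finType) (n : nat)
  (owner : M -> 'I_n) (C : {set M} -> R) :
  nonneg C -> monotone C -> normalized C ->
  (XOS C -> forall S : {set M}, C S <= potential owner C S) /\
  (subadditive C -> forall S : {set M}, C S / 2 <= potential owner C S).
Proof.
move=> C_ge0 _ C0; split=> [[t [a C_max]] S | C_sub S].
  have [r <-] := (C_max S).2.
  rewrite -(potential_additive owner); apply: ler_potential => A.
  exact: (C_max A).1.
exact: potential_ge_half.
Qed.
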